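(* Let $A,B$ be disjoint infinite sets, $\mathcal M=A\cup B$, and define a metric $\delta$ on $\mathcal M$ by $\delta(x,x)=0$, $\delta(x,y)=1$ if $x,y$ lie in different sets among $A,B$, and $\delta(x,y)=2$ if $x\ne y$ lie in the same set. Then for every strictly increasing function $\delta^*:[0,\infty)\to[0,\infty)$ with $\delta^*(0)=0$, the function $\delta^*\circ\delta$ on $\mathcal M\times\mathcal M$ is not of negative type.
   Context: A symmetric function $\rho:\mathcal M\times\mathcal M\to[0,\infty)$ with $\rho(x,x)=0$ is of negative type if for every $n\ge1$, all points $x_1,\dots,x_n\in\mathcal M$ and all real $a_1,\dots,a_n$ with $\sum_i a_i=0$ one has $\sum_{i,j}a_ia_j\,\rho(x_i,x_j)\le0$. *)

From mathcomp Require Import all_boot all_order all_algebra.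
From mathcomp Require Import boolp classical_sets cardinality reals.
Set Implicit Arguments. Unset Strict Implicit. Unset Printing Implicit Defensive.
Import Order.TTheory GRing.Theory Num.Theory.
Local Open Scope ring_scope.

Definition negative_type (R : realType) (M : Type) (rho : M -> M -> R) : Prop :=
  forall (n : nat) (x : 'I_n -> M) (a : 'I_n -> R),
    \sum_(i < n) a i = 0 ->
    \sum_(i < n) \sum_(j < n) a i * a j * rho (x i) (x j) <= 0.

Definition delta (R : realType) (A B : Type) (x y : A + B) : R :=
  match x, y with
  | inl a, inl a' => if pselect (a = a') then 0 else 2
  | inr b, inr b' => if pselect (b = b') then 0 else 2
  | _, _ => 1
  end.

From mathcomp Require Import all_boot all_order all_algebra.
From mathcomp Require Import boolp classical_sets functions cardinality reals.
From mathcomp Require Import ring.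
Set Implicit Arguments. Unset Strict Implicit. Unset Printing Implicit Defensive.
Import Order.TTheory GRing.Theory Num.Theory.
Local Open Scope ring_scope.
Local Open Scope classical_set_scope.

(* Put n points a_1..a_n of A with weight +1 and n points
   b_1..b_n of B with weight -1; the weights sum to 0.  Writing d1 = dstar 1
   and d2 = dstar 2, the quadratic form of dstar o delta on this configuration
   is  2 (n(n-1) d2 - n^2 d1) = 2n ((n-1) d2 - n d1),  which is positive as
   soon as n (d2 - d1) > d2; such an n exists because d1 < d2 by strict
   monotonicity. *)

Lemma negative_type_fin (R : realType) (M : Type) (rho : M -> M -> R) :
  negative_type rho ->
  forall (I : finType) (x : I -> M) (a : I -> R),
    \sum_(i : I) a i = 0 ->
    \sum_(i : I) \sum_(j : I) a i * a j * rho (x i) (x j) <= 0.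
Proof.
move=> NT I x a suma0.
have reidx (F : I -> R) : \sum_(i : I) F i = \sum_(k < #|I|) F (enum_val k).
  by rewrite -big_enum_val.
rewrite reidx; under eq_bigr => k _ do rewrite reidx.
by apply: NT; rewrite -reidx.
Qed.

Lemma sum_offdiag (R : nmodType) (I : finType) (F : I -> I -> R) (c : R) :
  (forall i j, F i j = if i == j then 0 else c) ->
  \sum_(i : I) \sum_(j : I) F i j = c *+ (#|I| * #|I|.-1).
Proof.
move=> hF.
have row i : \sum_(j : I) F i j = c *+ #|I|.-1.
  rewrite (bigD1 i) //= hF eqxx add0r.
  under eq_bigr => j hj do rewrite hF eq_sym (negbTE hj).
  by rewrite sumr_const cardC1.
under eq_bigr => i _ do rewrite row.
by rewrite sumr_const -mulrnA mulnC.
Qed.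

Lemma pselect_inj (T : Type) (I : eqType) (f : I -> T) (S : Type) (u v : S) :
  injective f ->
  forall i j, (if pselect (f i = f j) then u else v) = if i == j then u else v.
Proof.
move=> finj i j; case: pselect => [fij | neq] /=.
  by rewrite (finj _ _ fij) eqxx.
by case: eqP => // eij; case: neq; rewrite eij.
Qed.

Section TwoClusters.
Variables (R : realType) (A B : Type) (I : finType).
Variables (f : I -> A) (g : I -> B).
Hypotheses (finj : injective f) (ginj : injective g).

Definition cluster_point (k : I + I) : A + B :=
  match k with inl i => inl (f i) | inr j => inr (g j) end.

Definition cluster_weight (k : I + I) : R := if k is inl _ then 1 else -1.

Lemma cluster_weight_sum : \sum_(k : I + I) cluster_weight k = 0.
Proof. by rewrite big_sumType /= !sumr_const mulNrn addrN. Qed.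

(* Quadratic form of dstar o delta on the configuration: the two diagonal
   blocks contribute n(n-1) d2 each, the two cross blocks -n^2 d1 each. *)
Lemma cluster_form (dstar : R -> R) : dstar 0 = 0 ->
  let n := #|I| in
  \sum_(k : I + I) \sum_(l : I + I) cluster_weight k * cluster_weight l *
      dstar (delta R (cluster_point k) (cluster_point l))
  = (dstar 2 *+ (n * n.-1) - dstar 1 *+ (n * n)) *+ 2.
Proof.
move=> h0 n.
have same (T : Type) (h : I -> T) (hinj : injective h) (i j : I) :
    dstar (if pselect (h i = h j) then 0 else 2)
    = if i == j then 0 else dstar 2.
  by rewrite (pselect_inj _ _ hinj); case: eqP.
have diagA (i j : I) :
    1 * 1 * dstar (delta R (cluster_point (inl i)) (cluster_point (inl j)))
    = if i == j then 0 else dstar 2 by rewrite /= mulr1 mul1r (same _ _ finj).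
have diagB (i j : I) :
    -1 * -1 * dstar (delta R (cluster_point (inr i)) (cluster_point (inr j)))
    = if i == j then 0 else dstar 2 by rewrite /= mulrNN !mul1r (same _ _ ginj).
rewrite big_sumType /=.
under eq_bigr => i _ do rewrite big_sumType /=.
under [X in _ + X]eq_bigr => i _ do rewrite big_sumType /=.
rewrite !big_split /= !sumr_const -!mulrnA.
rewrite (sum_offdiag diagA) (sum_offdiag diagB).
by rewrite mulr1 mul1r !mulN1r !mulNrn [RHS]mulr2n [- _ + _]addrC.
Qed.

End TwoClusters.

Lemma large_cluster (R : archiRealFieldType) (d1 d2 : R) :
  0 < d1 -> d1 < d2 -> exists n, d1 *+ (n * n) < d2 *+ (n * n.-1).
Proof.
move=> d1pos d12; have gap : 0 < d2 - d1 by rewrite subr_gt0.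
have [k big] : exists k : nat, d2 < k.+1%:R * (d2 - d1).
  exists (Num.bound (d2 / (d2 - d1))).
  rewrite -ltr_pdivrMr //.
  apply: (lt_le_trans (archi_boundP _)); last by rewrite ler_nat leqnSn.
  by rewrite ltW // divr_gt0 // (lt_trans d1pos).
exists k.+1; rewrite -[d1 *+ _]mulr_natl -[d2 *+ _]mulr_natl !natrM -!mulrA.
rewrite ltr_pM2l ?ltr0n // -subr_gt0.
have -> : k.+1.-1%:R * d2 - k.+1%:R * d1 = k.+1%:R * (d2 - d1) - d2.
  by rewrite -natr1 /=; ring.
by rewrite subr_gt0.
Qed.

Lemma infinite_nat_inj (A : Type) :
  ~ finite_set [set: A] -> exists f : nat -> A, injective f.
Proof.
move/infiniteP/card_leP => [f].
exists (fun n => val (f (@SigSub _ _ _ n (mem_set I)))) => m n /val_inj/inj.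
by move/(_ (mem_set I) (mem_set I))/(congr1 val).
Qed.

Theorem mainTheorem10 (R : realType) (A B : Type)
  (hA : ~ finite_set [set: A]) (hB : ~ finite_set [set: B])
  (dstar : R -> R)
  (hpos : forall t : R, 0 <= t -> 0 <= dstar t)
  (hinc : forall s t : R, 0 <= s -> s < t -> dstar s < dstar t)
  (h0 : dstar 0 = 0) :
  ~ negative_type (fun x y : A + B => dstar (delta R x y)).
Proof.
move=> NT.
have d1pos : 0 < dstar 1 by rewrite -h0; apply: hinc.
have d12 : dstar 1 < dstar 2 by apply: hinc; rewrite ?ltr1n.
have [n ineq] := large_cluster d1pos d12.
have [f finj] := infinite_nat_inj hA; have [g ginj] := infinite_nat_inj hB.
have f'inj : injective (f \o val : 'I_n -> A) by apply: inj_comp finj val_inj.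
have g'inj : injective (g \o val : 'I_n -> B) by apply: inj_comp ginj val_inj.
have := negative_type_fin NT (cluster_point (f \o val) (g \o val))
  (@cluster_weight_sum R 'I_n).
rewrite cluster_form // card_ord; apply/negP; rewrite -ltNge.
by rewrite mulrn_wgt0 // subr_gt0.
Qed.
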